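(* Let $\vec p$ be a no-signalling box with inputs $x,y$ and outputs $a,b$, and let $\tau$ be a density operator on $\mathcal{H}_C\otimes\mathcal{H}_D$ (Alice holds $C$, Bob holds $D$). Suppose Alice, on input $x'$, applies to $C$ an instrument $\{\Lambda_{x|x'}\}_x$ (completely positive maps with $\sum_x\Lambda_{x|x'}$ trace preserving), feeds $x$ into the box, obtains $a$, and then measures $C$ with a POVM $\{M^{(2)}_{a'|a,x,x'}\}_{a'}$ producing $a'$; Bob similarly uses an instrument $\{\Gamma_{y|y'}\}_y$ on $D$ and POVMs $\{N^{(2)}_{b'|b,y,y'}\}_{b'}$. The resulting box is $$p'(a',b'|x',y')=\sum_{a,b,x,y}\mathrm{Tr}\Big(M^{(2)}_{a'|a,x,x'}\otimes N^{(2)}_{b'|b,y,y'}\,(\Lambda_{x|x'}\otimes\Gamma_{y|y'})[\tau]\Big)\,p(a,b|x,y).$$ Then: if $\tau$ is separable, $r_{\mathcal{L}}(\vec p')\le r_{\mathcal{L}}(\vec p)$ (equivalently $r_{\mathbb{S}}(\vec p')\le r_{\mathbb{S}}(\vec p)$); and for any density operator $\tau$, $r_{\mathcal{Q}}(\vec p')\le r_{\mathcal{Q}}(\vec p)$ (equivalently $r_{\mathbb{D}}(\vec p')\le r_{\mathbb{D}}(\vec p)$). Moreover, if $O\rightarrow\vec p$ then $O\otimes\tau\rightarrow\vec p'$ with respect to the cut $AC:BD$.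
   Context: Boxes $\vec p=(p(a,b|x,y))$ over finite alphabets are nonnegative with $\sum_{a,b}p(a,b|x,y)=1$; $\mathcal{L}$ is the set of local boxes $\sum_iq_ip_A^i(a|x)p_B^i(b|y)$; $\mathcal{Q}$ the set of boxes $\mathrm{Tr}(M_{a|x}\otimes N_{b|y}\rho)$ for density operators $\rho$ on finite-dimensional bipartite spaces and local POVMs. A pseudo-state is a Hermitian unit-trace operator; $O\rightarrow\vec p$ means $\vec p$ arises from $O$ by local POVMs via $p=\mathrm{Tr}(M_{a|x}\otimes N_{b|y}O)$. A state is separable if it is a convex combination of product states $\sigma_A\otimes\sigma_B$. For a set $S$, $r_S(v):=\inf\{t\ge0:\exists w\in S,\ (v+tw)/(1+t)\in S\}$; $r_{\mathcal{L}},r_{\mathcal{Q}}$ are robustnesses of boxes w.r.t. $\mathcal{L},\mathcal{Q}$; for pseudo-states $r_{\mathbb{S}}(O)$, $r_{\mathbb{D}}(O)$ are robustnesses w.r.t. separable states and density operators; $r_{\mathbb{S}}(\vec p):=\inf_{O\rightarrow\vec p}r_{\mathbb{S}}(O)$, $r_{\mathbb{D}}(\vec p):=\inf_{O\rightarrow\vec p}r_{\mathbb{D}}(O)$. *)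

(* Complex scalars are modelled by an arbitrary
   numClosedFieldType C (e.g. algC). *)
From HB Require Import structures.
From mathcomp Require Import all_boot all_order all_algebra.
Set Implicit Arguments. Unset Strict Implicit. Unset Printing Implicit Defensive.
Import Order.TTheory GRing.Theory Num.Theory.
Local Open Scope ring_scope.

Section QDefs.
Variable C : numClosedFieldType.

Definition adj m n (A : 'M[C]_(m, n)) : 'M[C]_(n, m) := (map_mx Num.conj_op A)^T.

Definition hermitian n (A : 'M[C]_n) : Prop := adj A = A.

Definition psd n (A : 'M[C]_n) : Prop :=
  hermitian A /\ forall v : 'cV[C]_n, 0 <= (adj v *m A *m v) 0 0.

Definition density n (A : 'M[C]_n) : Prop := psd A /\ \tr A = 1.

Definition pseudo_state n (A : 'M[C]_n) : Prop := hermitian A /\ \tr A = 1.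

Definition povm k d (M : 'I_k -> 'M[C]_d) : Prop :=
  (forall i, psd (M i)) /\ \sum_(i < k) M i = 1%:M.

(* tensor-product indices H_m (x) H_n = C^(m*n) *)
Definition tidx m n (i : 'I_m) (j : 'I_n) : 'I_(m * n) := mxvec_index i j.
Definition tsplit m n (k : 'I_(m * n)) : 'I_m * 'I_n :=
  enum_val (cast_ord (esym (mxvec_cast m n)) k).

Definition kron m1 n1 m2 n2 (A : 'M[C]_(m1, n1)) (B : 'M[C]_(m2, n2))
  : 'M[C]_(m1 * m2, n1 * n2) :=
  \matrix_(i, j) (A (tsplit i).1 (tsplit j).1 * B (tsplit i).2 (tsplit j).2).

(* tensor product f (x) g of linear maps on matrix spaces, applied to X
   (defined by linear extension from matrix units) *)
Definition tens_map d1 e1 d2 e2 (f : 'M[C]_d1 -> 'M[C]_e1)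
  (g : 'M[C]_d2 -> 'M[C]_e2) (X : 'M[C]_(d1 * d2)) : 'M[C]_(e1 * e2) :=
  \sum_(i < d1) \sum_(j < d1) \sum_(k < d2) \sum_(l < d2)
     X (tidx i k) (tidx j l) *: kron (f (delta_mx i j)) (g (delta_mx k l)).

Definition linear_map d e (f : 'M[C]_d -> 'M[C]_e) : Prop :=
  forall (c : C) X Y, f (c *: X + Y) = c *: f X + f Y.

Definition completely_positive d e (f : 'M[C]_d -> 'M[C]_e) : Prop :=
  linear_map f /\
  forall (n : nat) (X : 'M[C]_(n * d)), psd X -> psd (tens_map id f X).

(* instrument {Lam_{x|x'}}_x on a d-dimensional system, for each setting x' *)
Definition instrument nx' nx d (Lam : 'I_nx' -> 'I_nx -> 'M[C]_d -> 'M[C]_d)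
  : Prop :=
  (forall x' x, completely_positive (Lam x' x)) /\
  (forall x' (rho : 'M[C]_d), \tr (\sum_(x < nx) Lam x' x rho) = \tr rho).

Definition separable m n (X : 'M[C]_(m * n)) : Prop :=
  exists (k : nat) (q : 'I_k -> C) (sA : 'I_k -> 'M[C]_m) (sB : 'I_k -> 'M[C]_n),
    (forall i, 0 <= q i) /\ \sum_(i < k) q i = 1 /\
    (forall i, density (sA i) /\ density (sB i)) /\
    X = \sum_(i < k) q i *: kron (sA i) (sB i).

(* p a b x y = p(a,b|x,y) *)
Definition box (na nb nx ny : nat) := 'I_na -> 'I_nb -> 'I_nx -> 'I_ny -> C.

Definition is_box na nb nx ny (p : box na nb nx ny) : Prop :=
  (forall a b x y, 0 <= p a b x y) /\
  (forall x y, \sum_(a < na) \sum_(b < nb) p a b x y = 1).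

Definition no_signalling na nb nx ny (p : box na nb nx ny) : Prop :=
  (forall a x y y', \sum_(b < nb) p a b x y = \sum_(b < nb) p a b x y') /\
  (forall b y x x', \sum_(a < na) p a b x y = \sum_(a < na) p a b x' y).

Definition cond_distr na nx (q : 'I_na -> 'I_nx -> C) : Prop :=
  (forall a x, 0 <= q a x) /\ (forall x, \sum_(a < na) q a x = 1).

Definition local_box na nb nx ny (p : box na nb nx ny) : Prop :=
  exists (k : nat) (q : 'I_k -> C) (pA : 'I_k -> 'I_na -> 'I_nx -> C)
         (pB : 'I_k -> 'I_nb -> 'I_ny -> C),
    (forall i, 0 <= q i) /\ \sum_(i < k) q i = 1 /\
    (forall i, cond_distr (pA i) /\ cond_distr (pB i)) /\
    (forall a b x y, p a b x y = \sum_(i < k) q i * pA i a x * pB i b y).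

Definition realizes dA dB na nb nx ny (O : 'M[C]_(dA * dB)) (p : box na nb nx ny)
  : Prop :=
  exists (M : 'I_na -> 'I_nx -> 'M[C]_dA) (N : 'I_nb -> 'I_ny -> 'M[C]_dB),
    (forall x, povm (fun a => M a x)) /\ (forall y, povm (fun b => N b y)) /\
    (forall a b x y, p a b x y = \tr (kron (M a x) (N b y) *m O)).

Definition quantum_box na nb nx ny (p : box na nb nx ny) : Prop :=
  exists (dA dB : nat) (rho : 'M[C]_(dA * dB)), density rho /\ realizes rho p.

Definition mix_box na nb nx ny (v w : box na nb nx ny) (t : C) : box na nb nx ny :=
  fun a b x y => (v a b x y + t * w a b x y) / (1 + t).

(* t is feasible in the infimum defining r_S(v) *)
Definition rob_feasible na nb nx ny (S : box na nb nx ny -> Prop)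
  (v : box na nb nx ny) (t : C) : Prop :=
  0 <= t /\ exists w, S w /\ S (mix_box v w t).

Definition mix_op n (O s : 'M[C]_n) (t : C) : 'M[C]_n := (1 + t)^-1 *: (O + t *: s).

(* t feasible for r_SS(p) = inf_{O -> p} r_SS(O)  (robustness w.r.t.
   separable states) *)
Definition rob_sep_feasible na nb nx ny (p : box na nb nx ny) (t : C) : Prop :=
  0 <= t /\ exists (dA dB : nat) (O s : 'M[C]_(dA * dB)),
    pseudo_state O /\ realizes O p /\
    separable s /\ separable (mix_op O s t).

(* t feasible for r_DD(p) = inf_{O -> p} r_DD(O) (w.r.t. density operators) *)
Definition rob_dens_feasible na nb nx ny (p : box na nb nx ny) (t : C) : Prop :=
  0 <= t /\ exists (dA dB : nat) (O s : 'M[C]_(dA * dB)),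
    pseudo_state O /\ realizes O p /\
    density s /\ density (mix_op O s t).

(* inf F <= inf G (with inf of the empty set = +infinity) *)
Definition inf_le (F G : C -> Prop) : Prop :=
  forall t, G t -> forall eps : C, 0 < eps -> exists t', F t' /\ t' < t + eps.

Definition wired na nb nx ny na' nb' nx' ny' dC dD
  (p : box na nb nx ny) (tau : 'M[C]_(dC * dD))
  (Lam : 'I_nx' -> 'I_nx -> 'M[C]_dC -> 'M[C]_dC)
  (Gam : 'I_ny' -> 'I_ny -> 'M[C]_dD -> 'M[C]_dD)
  (M2 : 'I_na' -> 'I_na -> 'I_nx -> 'I_nx' -> 'M[C]_dC)
  (N2 : 'I_nb' -> 'I_nb -> 'I_ny -> 'I_ny' -> 'M[C]_dD) : box na' nb' nx' ny' :=
  fun a' b' x' y' =>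
    \sum_(a < na) \sum_(b < nb) \sum_(x < nx) \sum_(y < ny)
      \tr (kron (M2 a' a x x') (N2 b' b y y') *m
           tens_map (Lam x' x) (Gam y' y) tau) * p a b x y.

(* reorder (A B)(C D) -> (A C)(B D), i.e. view an operator on
   (H_A (x) H_B) (x) (H_C (x) H_D) w.r.t. the cut AC:BD *)
Definition regroup_idx dA dB dC dD (k : 'I_((dA * dC) * (dB * dD)))
  : 'I_((dA * dB) * (dC * dD)) :=
  let ac := (tsplit k).1 in let bd := (tsplit k).2 in
  tidx (tidx (tsplit ac).1 (tsplit bd).1) (tidx (tsplit ac).2 (tsplit bd).2).

Definition regroup dA dB dC dD (X : 'M[C]_((dA * dB) * (dC * dD)))
  : 'M[C]_((dA * dC) * (dB * dD)) :=
  \matrix_(i, j) X (regroup_idx i) (regroup_idx j).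

End QDefs.

From Pilot Require Import Defs.
From HB Require Import structures.
From mathcomp Require Import all_boot all_order all_algebra.
Set Implicit Arguments. Unset Strict Implicit. Unset Printing Implicit Defensive.
Import Order.TTheory GRing.Theory Num.Theory.
Local Open Scope ring_scope.

(* The proof works in the Heisenberg picture.  The dual f^† of a linear map f
   (dualm) satisfies tr(P f(X)) = tr(f^†(P) X); it maps psd operators to psd
   operators when f is completely positive, and the duals of an instrument sum
   to the identity.  Hence p'(a',b'|x',y') is the sum over a,b,x,y of
   tr((Λ^†(M2) ⊗ Γ^†(N2)) τ) p(a,b|x,y).  Consequently:
   - if O -> p by POVMs M, N, then regroup(O ⊗ τ) -> p' (cut AC:BD) by the
     POVMs  sum_{a,x} M_{a|x} ⊗ Λ^†_{x|x'}(M2_{a'|a,x,x'})  and their Bob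
     analogues; in particular wiring maps quantum boxes to quantum boxes;
   - if p is local and τ separable, p' is local, with hidden variable the
     pair (local-model index, separable-decomposition index);
   - wiring is affine in p, and O ↦ regroup(O ⊗ τ) preserves pseudo-states,
     density and separable operators and commutes with mixing.
   Thus every feasible t in the infimum defining a robustness of p is also
   feasible for p', which gives all four inequalities. *)

Section Tensor.
Variable C : numClosedFieldType.

Lemma tsplitK m n (i : 'I_m) (j : 'I_n) : tsplit (tidx i j) = (i, j).
Proof. by rewrite /tsplit /tidx /mxvec_index cast_ordK enum_rankK. Qed.

Lemma tidx_eq m n (i i' : 'I_m) (j j' : 'I_n) :
  (tidx i j == tidx i' j') = (i == i') && (j == j').
Proof.
apply/eqP/andP => [E|[/eqP-> /eqP->]] //.
by have := congr1 (@tsplit m n) E; rewrite !tsplitK => -[-> ->].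
Qed.

Lemma sum_tidx (V : nmodType) m n (F : 'I_(m * n) -> V) :
  \sum_k F k = \sum_i \sum_j F (tidx i j).
Proof.
rewrite pair_big /= (reindex (uncurry (@mxvec_index m n))) /=.
  by apply: eq_bigr => -[i j].
exact: curry_mxvec_bij.
Qed.

(* Product weights on a product index set; used to merge two convex
   decompositions into one. *)
Lemma sum_prod_weights m n (q : 'I_m -> C) (r : 'I_n -> C) :
  \sum_(l : 'I_(m * n)) q (tsplit l).1 * r (tsplit l).2
  = (\sum_i q i) * (\sum_j r j).
Proof.
rewrite sum_tidx mulr_suml; apply: eq_bigr => i _.
by rewrite mulr_sumr; apply: eq_bigr => j _; rewrite tsplitK.
Qed.

Lemma sum_tidx4 (V : nmodType) m1 m2 n1 n2
  (F : 'I_((m1 * m2) * (n1 * n2)) -> V) :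
  \sum_k F k = \sum_i \sum_j \sum_k \sum_l F (tidx (tidx i j) (tidx k l)).
Proof.
rewrite !sum_tidx; apply: eq_bigr => i _; apply: eq_bigr => j _.
exact: sum_tidx.
Qed.

Lemma kronE m1 n1 m2 n2 (A : 'M[C]_(m1, n1)) (B : 'M[C]_(m2, n2)) i j k l :
  kron A B (tidx i k) (tidx j l) = A i j * B k l.
Proof. by rewrite mxE !tsplitK. Qed.

Lemma mul_kron m1 n1 p1 m2 n2 p2 (A : 'M[C]_(m1, n1)) (B : 'M[C]_(m2, n2))
  (A' : 'M[C]_(n1, p1)) (B' : 'M[C]_(n2, p2)) :
  kron A B *m kron A' B' = kron (A *m A') (B *m B').
Proof.
apply/matrixP => r s; case/mxvec_indexP: r => i k; case/mxvec_indexP: s => j l.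
rewrite kronE !mxE sum_tidx mulr_suml; apply: eq_bigr => p _.
by rewrite mulr_sumr; apply: eq_bigr => q _; rewrite !kronE mulrACA.
Qed.

Lemma tr_kron m n (A : 'M[C]_m) (B : 'M[C]_n) : \tr (kron A B) = \tr A * \tr B.
Proof.
rewrite /mxtrace sum_tidx mulr_suml; apply: eq_bigr => i _.
by rewrite mulr_sumr; apply: eq_bigr => k _; rewrite kronE.
Qed.

Lemma kron_suml m1 n1 m2 n2 I (r : seq I) (P : pred I) (F : I -> 'M[C]_(m1, n1))
  (B : 'M[C]_(m2, n2)) :
  kron (\sum_(i <- r | P i) F i) B = \sum_(i <- r | P i) kron (F i) B.
Proof.
apply/matrixP => u v; rewrite !mxE summxE mulr_suml summxE.
by apply: eq_bigr => i _; rewrite mxE.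
Qed.

Lemma kron_sumr m1 n1 m2 n2 I (r : seq I) (P : pred I) (A : 'M[C]_(m1, n1))
  (F : I -> 'M[C]_(m2, n2)) :
  kron A (\sum_(i <- r | P i) F i) = \sum_(i <- r | P i) kron A (F i).
Proof.
apply/matrixP => u v; rewrite !mxE summxE mulr_sumr summxE.
by apply: eq_bigr => i _; rewrite mxE.
Qed.

Lemma kronZl m1 n1 m2 n2 c (A : 'M[C]_(m1, n1)) (B : 'M[C]_(m2, n2)) :
  kron (c *: A) B = c *: kron A B.
Proof. by apply/matrixP => u v; rewrite !mxE mulrA. Qed.

Lemma kronZr m1 n1 m2 n2 c (A : 'M[C]_(m1, n1)) (B : 'M[C]_(m2, n2)) :
  kron A (c *: B) = c *: kron A B.
Proof. by apply/matrixP => u v; rewrite !mxE mulrCA. Qed.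

Lemma kronDl m1 n1 m2 n2 (A A' : 'M[C]_(m1, n1)) (B : 'M[C]_(m2, n2)) :
  kron (A + A') B = kron A B + kron A' B.
Proof. by apply/matrixP => u v; rewrite !mxE mulrDl. Qed.

Lemma kron1 m n : kron (1%:M : 'M[C]_m) (1%:M : 'M[C]_n) = 1%:M.
Proof.
apply/matrixP => r s; case/mxvec_indexP: r => i k; case/mxvec_indexP: s => j l.
rewrite kronE !mxE -/(tidx i k) -/(tidx j l) tidx_eq.
by case: (i == j); case: (k == l); rewrite ?mulr1 ?mulr0.
Qed.

Lemma kron_delta m1 n1 m2 n2 (i : 'I_m1) (j : 'I_n1) (k : 'I_m2) (l : 'I_n2) :
  kron (delta_mx i j : 'M[C]_(m1, n1)) (delta_mx k l : 'M[C]_(m2, n2))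
  = delta_mx (tidx i k) (tidx j l).
Proof.
apply/matrixP => r s.
case/mxvec_indexP: r => i' k'; case/mxvec_indexP: s => j' l'.
rewrite kronE !mxE -/(tidx i' k') -/(tidx j' l') !tidx_eq.
by case: (i' == i); case: (j' == j); case: (k' == k); case: (l' == l);
  rewrite ?mulr1 ?mulr0 ?mul0r.
Qed.

Lemma kron_sum4 m1 n1 m2 n2 na nx nb ny
  (F : 'I_na -> 'I_nx -> 'M[C]_(m1, n1)) (G : 'I_nb -> 'I_ny -> 'M[C]_(m2, n2)) :
  kron (\sum_a \sum_x F a x) (\sum_b \sum_y G b y)
  = \sum_a \sum_x \sum_b \sum_y kron (F a x) (G b y).
Proof.
rewrite kron_suml; apply: eq_bigr => a _; rewrite kron_suml.
apply: eq_bigr => x _; rewrite kron_sumr; apply: eq_bigr => b _.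
by rewrite kron_sumr.
Qed.

Lemma expand_kron d1 d2 (X : 'M[C]_(d1 * d2)) :
  X = \sum_(i < d1) \sum_(j < d1) \sum_(k < d2) \sum_(l < d2)
     X (tidx i k) (tidx j l) *: kron (delta_mx i j) (delta_mx k l).
Proof.
rewrite {1}(matrix_sum_delta X) sum_tidx; apply: eq_bigr => i _.
under eq_bigr => k _ do rewrite sum_tidx.
rewrite exchange_big; apply: eq_bigr => j _; apply: eq_bigr => k _.
by apply: eq_bigr => l _; rewrite kron_delta.
Qed.

End Tensor.

Section Regroup.
Variable C : numClosedFieldType.

Lemma regroup_idxE dA dB dC dD (a : 'I_dA) (b : 'I_dB) (c : 'I_dC) (d : 'I_dD) :
  regroup_idx (tidx (tidx a c) (tidx b d)) = tidx (tidx a b) (tidx c d).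
Proof. by rewrite /regroup_idx !tsplitK. Qed.

Lemma regroup_idxK dA dB dC dD (k : 'I_((dA * dC) * (dB * dD))) :
  @regroup_idx dA dC dB dD (regroup_idx k) = k.
Proof.
case/mxvec_indexP: k => ac bd; case/mxvec_indexP: ac => a c.
case/mxvec_indexP: bd => b d.
by rewrite (regroup_idxE a b c d) regroup_idxE.
Qed.

Lemma sum_regroup dA dB dC dD (V : nmodType)
  (F : 'I_((dA * dB) * (dC * dD)) -> V) :
  \sum_(k : 'I_((dA * dC) * (dB * dD))) F (regroup_idx k) = \sum_k F k.
Proof.
rewrite (sum_tidx4 F) sum_tidx4; apply: eq_bigr => a _.
rewrite exchange_big; apply: eq_bigr => b _; apply: eq_bigr => c _.
by apply: eq_bigr => d _; rewrite regroup_idxE.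
Qed.

Lemma regroup_kron dA dB dC dD (A : 'M[C]_dA) (B : 'M[C]_dB) (Cm : 'M[C]_dC)
  (D : 'M[C]_dD) :
  regroup (kron (kron A B) (kron Cm D)) = kron (kron A Cm) (kron B D).
Proof.
apply/matrixP => r s.
case/mxvec_indexP: r => ac bd; case/mxvec_indexP: ac => a c.
case/mxvec_indexP: bd => b d.
case/mxvec_indexP: s => ac bd; case/mxvec_indexP: ac => a' c'.
case/mxvec_indexP: bd => b' d'.
by rewrite mxE !regroup_idxE !kronE mulrACA.
Qed.

(* Regrouping is a simultaneous permutation of rows and columns, so it
   preserves traces of products. *)
Lemma tr_regroupM dA dB dC dD (Z Y : 'M[C]_((dA * dB) * (dC * dD))) :
  \tr (regroup Z *m regroup Y) = \tr (Z *m Y).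
Proof.
rewrite /mxtrace -(sum_regroup (fun k => (Z *m Y) k k)); apply: eq_bigr => k _.
rewrite !mxE -(sum_regroup (fun j => Z _ j * Y j _)).
by apply: eq_bigr => j _; rewrite !mxE.
Qed.

Lemma tr_regroup_kron dA dB dC dD (MA : 'M[C]_dA) (NB : 'M[C]_dB)
  (DM : 'M[C]_dC) (DN : 'M[C]_dD) (O : 'M[C]_(dA * dB)) (tau : 'M[C]_(dC * dD)) :
  \tr (kron (kron MA DM) (kron NB DN) *m regroup (kron O tau))
  = \tr (kron MA NB *m O) * \tr (kron DM DN *m tau).
Proof. by rewrite -regroup_kron tr_regroupM mul_kron tr_kron. Qed.

Lemma tr_regroup dA dB dC dD (X : 'M[C]_((dA * dB) * (dC * dD))) :
  \tr (regroup X) = \tr X.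
Proof.
rewrite /mxtrace -(sum_regroup (fun k => X k k)).
by apply: eq_bigr => k _; rewrite mxE.
Qed.

Lemma adj_regroup dA dB dC dD (X : 'M[C]_((dA * dB) * (dC * dD))) :
  adj (regroup X) = regroup (adj X).
Proof. by apply/matrixP => r s; rewrite !mxE. Qed.

Lemma regroupD dA dB dC dD (X Y : 'M[C]_((dA * dB) * (dC * dD))) :
  regroup (X + Y) = regroup X + regroup Y.
Proof. by apply/matrixP => r s; rewrite !mxE. Qed.

Lemma regroupZ dA dB dC dD c (X : 'M[C]_((dA * dB) * (dC * dD))) :
  regroup (c *: X) = c *: regroup X.
Proof. by apply/matrixP => r s; rewrite !mxE. Qed.

Lemma regroup_sum dA dB dC dD I (r : seq I) (P : pred I)
  (F : I -> 'M[C]_((dA * dB) * (dC * dD))) :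
  regroup (\sum_(i <- r | P i) F i) = \sum_(i <- r | P i) regroup (F i).
Proof.
apply/matrixP => u v; rewrite mxE !summxE.
by apply: eq_bigr => i _; rewrite mxE.
Qed.

End Regroup.

Section Positivity.
Variable C : numClosedFieldType.

Lemma adj_mul m n p (A : 'M[C]_(m, n)) (B : 'M[C]_(n, p)) :
  adj (A *m B) = adj B *m adj A.
Proof.
apply/matrixP => i j; rewrite !mxE rmorph_sum; apply: eq_bigr => k _.
by rewrite !mxE rmorphM mulrC.
Qed.

Lemma adjK m n (A : 'M[C]_(m, n)) : adj (adj A) = A.
Proof. by apply/matrixP => i j; rewrite !mxE conjCK. Qed.

Lemma adjD m n (A B : 'M[C]_(m, n)) : adj (A + B) = adj A + adj B.
Proof. by apply/matrixP => i j; rewrite !mxE rmorphD. Qed.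

Lemma adjZ m n c (A : 'M[C]_(m, n)) : adj (c *: A) = c^* *: adj A.
Proof. by apply/matrixP => i j; rewrite !mxE rmorphM. Qed.

Lemma adj_delta m n (i : 'I_m) (j : 'I_n) :
  adj (delta_mx i j : 'M[C]_(m, n)) = delta_mx j i.
Proof. by apply/matrixP => a b; rewrite !mxE rmorph_nat andbC. Qed.

Lemma adj_kron m1 n1 m2 n2 (A : 'M[C]_(m1, n1)) (B : 'M[C]_(m2, n2)) :
  adj (kron A B) = kron (adj A) (adj B).
Proof.
apply/matrixP => r s; case/mxvec_indexP: r => i k; case/mxvec_indexP: s => j l.
by rewrite !mxE !tsplitK rmorphM.
Qed.

Definition qf n (A : 'M[C]_n) (v : 'cV[C]_n) : C := (adj v *m A *m v) 0 0.

Lemma qfE n (A : 'M[C]_n) v :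
  qf A v = \sum_i \sum_j (v i 0)^* * A i j * v j 0.
Proof.
rewrite /qf mxE; under eq_bigr => j _ do rewrite mxE mulr_suml.
rewrite exchange_big; apply: eq_bigr => i _; apply: eq_bigr => j _.
by rewrite !mxE.
Qed.

Lemma qf_sum n I (r : seq I) (P : pred I) (F : I -> 'M[C]_n) v :
  qf (\sum_(i <- r | P i) F i) v = \sum_(i <- r | P i) qf (F i) v.
Proof.
apply: (big_rec2 (fun s M => qf M v = s)).
  by rewrite /qf mulmx0 mul0mx mxE.
by move=> i s M _ <-; rewrite /qf mulmxDr mulmxDl mxE.
Qed.

Lemma qfB n (A B : 'M[C]_n) v : qf (A - B) v = qf A v - qf B v.
Proof. by rewrite /qf mulmxBr mulmxBl !mxE. Qed.

Lemma qf_adj n (A : 'M[C]_n) v : qf (adj A) v = (qf A v)^*.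
Proof.
transitivity (adj (adj v *m A *m v) 0 0); last by rewrite /qf /adj mxE [LHS]mxE.
by rewrite !adj_mul adjK mulmxA.
Qed.

(* The form on e_i + c e_j, used to read off matrix entries. *)
Lemma qf_comb n (A : 'M[C]_n) i j c :
  qf A (delta_mx i 0 + c *: delta_mx j 0)
  = A i i + c * A i j + c^* * A j i + c^* * c * A j j.
Proof.
have E k l :
  (adj (delta_mx k 0 : 'cV[C]_n) *m A *m (delta_mx l 0 : 'cV[C]_n)) 0 0 = A k l.
  by rewrite adj_delta -rowE -colE !mxE.
have {}E k l : \sum_s (adj (delta_mx k 0 : 'cV[C]_n) *m A) 0 s
                   * (delta_mx l 0 : 'cV[C]_n) s 0 = A k l.
  by have := E k l; rewrite mxE.
rewrite /qf adjD adjZ !mulmxDl !mulmxDr -!scalemxAl -!scalemxAr !mxE !E.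
by rewrite !mulrA addrA; congr (_ + _); rewrite addrAC.
Qed.

(* Polarization: a matrix whose quadratic form vanishes is zero. *)
Lemma qf_eq0 n (B : 'M[C]_n) : (forall v, qf B v = 0) -> B = 0.
Proof.
move=> B0; have diag0 i : B i i = 0.
  have := B0 (delta_mx i 0 + 0 *: delta_mx i 0).
  by rewrite qf_comb rmorph0 !mul0r !addr0.
apply/matrixP => i j; rewrite mxE.
have := B0 (delta_mx i 0 + 1 *: delta_mx j 0).
have := B0 (delta_mx i 0 + 'i *: delta_mx j 0).
rewrite !qf_comb !diag0 conjCi rmorph1 !mul1r !mulr0 !addr0 !add0r.
move=> /eqP; rewrite mulNr subr_eq0 => /eqP /(mulfI (neq0Ci C)) Eij.
by rewrite -Eij -mulr2n => /eqP; rewrite mulrn_eq0 => /eqP.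
Qed.

Lemma hermitian_of_form n (A : 'M[C]_n) :
  (forall v, 0 <= qf A v) -> Defs.hermitian A.
Proof.
move=> A0; apply/eqP; rewrite -subr_eq0; apply/eqP/qf_eq0 => v.
by rewrite qfB qf_adj conj_Creal ?subrr // ger0_real.
Qed.

Lemma psdP n (A : 'M[C]_n) : psd A <-> forall v, 0 <= qf A v.
Proof. by split => [[_ H] //|H]; split => //; exact: hermitian_of_form. Qed.

Lemma sqnorm_ge0 n (w : 'cV[C]_n) : 0 <= (adj w *m w) 0 0.
Proof.
rewrite mxE; apply: sumr_ge0 => i _; rewrite !mxE mulrC; exact: mul_conjC_ge0.
Qed.

Lemma qf_gram k n (B : 'M[C]_(k, n)) v : 0 <= qf (adj B *m B) v.
Proof.
by rewrite /qf !mulmxA -(mulmxA (adj v *m adj B)) -adj_mul; exact: sqnorm_ge0.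
Qed.

Lemma qf_delta n (P X : 'M[C]_n) i :
  qf X (adj P *m delta_mx i 0) = (P *m X *m adj P) i i.
Proof.
rewrite /qf adj_mul adjK adj_delta !mulmxA -!(mulmxA 'e_i).
by rewrite -colE -rowE !mxE.
Qed.

Lemma adj_diag n (s : 'rV[C]_n) : adj (diag_mx s) = diag_mx (map_mx Num.conj s).
Proof.
apply/matrixP => i j; rewrite !mxE rmorphMn.
by case: (eqVneq i j) => [->|ne]; rewrite ?eqxx // eq_sym (negbTE ne) !mulr0n.
Qed.

(* Every psd matrix is a Gram matrix B^† B (spectral theorem). *)
Lemma psd_factor n (A : 'M[C]_n) : psd A -> exists B : 'M[C]_n, A = adj B *m B.
Proof.
move=> [hA HA].
have adjE (M : 'M[C]_n) : adj M = map_mx Num.conj M^T by rewrite /adj map_trmx.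
have /orthomx_spectralP AE : A \is normalmx.
  by apply/normalmxP; rewrite -!adjE hA.
set P := spectralmx A in AE; set d := spectral_diag A in AE.
have PU : P *m adj P = 1%:M.
  by rewrite adjE; apply/unitarymxP; exact: spectral_unitarymx.
rewrite (invmx_unitary (spectral_unitarymx A)) -/P -adjE in AE.
have PAP : P *m A *m adj P = diag_mx d.
  by rewrite {1}AE !mulmxA PU mul1mx -mulmxA PU mulmx1.
have d_ge0 i : 0 <= d 0 i.
  have : 0 <= qf A (adj P *m delta_mx i 0) := HA _.
  by rewrite qf_delta PAP mxE eqxx mulr1n.
exists (diag_mx (map_mx sqrtC d) *m P).
rewrite adj_mul mulmxA -(mulmxA (adj P)) adj_diag mulmx_diag.
rewrite {1}AE; congr (_ *m diag_mx _ *m _); apply/rowP => j.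
by rewrite !mxE conj_Creal ?ger0_real ?sqrtC_ge0 // -expr2 sqrtCK.
Qed.

Lemma psd_sum n I (r : seq I) (P : pred I) (F : I -> 'M[C]_n) :
  (forall i, P i -> psd (F i)) -> psd (\sum_(i <- r | P i) F i).
Proof.
move=> H; apply/psdP => v; rewrite qf_sum; apply: sumr_ge0 => i Pi.
by have /psdP := H i Pi; apply.
Qed.

Lemma psd_outer n (v : 'cV[C]_n) : psd (v *m adj v).
Proof. by apply/psdP => w; rewrite -{1}(adjK v); exact: qf_gram. Qed.

Lemma qf_tr n (A : 'M[C]_n) v : qf A v = \tr (A *m (v *m adj v)).
Proof. by rewrite mulmxA mxtrace_mulC mulmxA trace_mx11. Qed.

Lemma tr_psd_mul n (P Q : 'M[C]_n) : psd P -> psd Q -> 0 <= \tr (P *m Q).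
Proof.
move=> /psd_factor [B ->] /psdP HQ.
rewrite -mulmxA mxtrace_mulC /mxtrace; apply: sumr_ge0 => i _.
by rewrite -qf_delta; exact: HQ.
Qed.

Lemma psd_kron m n (A : 'M[C]_m) (B : 'M[C]_n) :
  psd A -> psd B -> psd (kron A B).
Proof.
move=> /psd_factor [F ->] /psd_factor [G ->].
by apply/psdP => v; rewrite -mul_kron -adj_kron; exact: qf_gram.
Qed.

(* Regrouping is a unitary conjugation by a permutation, hence preserves psd. *)
Lemma psd_regroup dA dB dC dD (X : 'M[C]_((dA * dB) * (dC * dD))) :
  psd X -> psd (regroup X).
Proof.
move=> /psdP H; apply/psdP => v.
have := H (\col_k v (@regroup_idx dA dC dB dD k) 0).
rewrite !qfE -(sum_regroup (fun k => \sum_j _)).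
congr (0 <= _); apply: eq_bigr => k _.
rewrite -(sum_regroup (fun j => _)); apply: eq_bigr => j _.
by rewrite !mxE !regroup_idxK.
Qed.

End Positivity.

Section Maps.
Variable C : numClosedFieldType.

Section Linear.
Variables (d e : nat) (f : 'M[C]_d -> 'M[C]_e).
Hypothesis lf : linear_map f.

Lemma lin0 : f 0 = 0.
Proof.
have h := lf 1 0 0; rewrite !scale1r !addr0 in h.
by have := congr1 (fun Z => Z - f 0) h; rewrite addrK subrr => <-.
Qed.

Lemma linD X Y : f (X + Y) = f X + f Y.
Proof. by have := lf 1 X Y; rewrite !scale1r. Qed.

Lemma linZ c X : f (c *: X) = c *: f X.
Proof. by have := lf c X 0; rewrite !addr0 lin0 addr0. Qed.

Lemma lin_sum I (r : seq I) (P : pred I) (F : I -> 'M[C]_d) :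
  f (\sum_(i <- r | P i) F i) = \sum_(i <- r | P i) f (F i).
Proof.
apply: (big_rec2 (fun s M => f M = s)); first exact: lin0.
by move=> i s M _ <-; rewrite linD.
Qed.

Lemma lin_expand X : f X = \sum_i \sum_j X i j *: f (delta_mx i j).
Proof.
rewrite {1}(matrix_sum_delta X) lin_sum; apply: eq_bigr => i _.
by rewrite lin_sum; apply: eq_bigr => j _; rewrite linZ.
Qed.

End Linear.

(* Embedding of 'M_d into 'M_(1 * d) (a trivial ancilla), to specialise
   complete positivity to plain positivity. *)
Definition lift1 d (Y : 'M[C]_d) : 'M[C]_(1 * d) :=
  \matrix_(r, s) Y (tsplit r).2 (tsplit s).2.

Lemma qf_lift1 d (Y : 'M[C]_d) v :
  qf (lift1 Y) v = qf Y (\col_k v (tidx ord0 k) 0).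
Proof.
rewrite !qfE sum_tidx big_ord1; apply: eq_bigr => k _.
rewrite sum_tidx big_ord1; apply: eq_bigr => l _.
by rewrite !mxE !tsplitK.
Qed.

Lemma psd_lift1 d (Y : 'M[C]_d) : psd (lift1 Y) <-> psd Y.
Proof.
split => /psdP H; apply/psdP => w; last by rewrite qf_lift1.
have := H (\col_r w (tsplit r).2 0); rewrite qf_lift1.
suff -> : \col_k (\col_r w (tsplit r).2 0) (@tidx 1 d ord0 k) 0 = w by [].
by apply/colP => k; rewrite !mxE tsplitK.
Qed.

Lemma tens_lift1 d e (f : 'M[C]_d -> 'M[C]_e) (Y : 'M[C]_d) :
  linear_map f -> tens_map id f (lift1 Y) = lift1 (f Y).
Proof.
move=> lf; apply/matrixP => r s.
case/mxvec_indexP: r => i k; case/mxvec_indexP: s => j l.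
rewrite [RHS]mxE !tsplitK /= (lin_expand lf Y) /tens_map.
rewrite (ord1 i) (ord1 j) !big_ord1 !summxE; apply: eq_bigr => k' _.
rewrite !summxE; apply: eq_bigr => l' _.
by rewrite !mxE !tsplitK /= mul1r.
Qed.

Lemma cp_psd d e (f : 'M[C]_d -> 'M[C]_e) (Y : 'M[C]_d) :
  completely_positive f -> psd Y -> psd (f Y).
Proof.
move=> [lf H] /psd_lift1 pY; apply/psd_lift1; rewrite -tens_lift1 //.
exact: H.
Qed.

Lemma tr_sum n I (r : seq I) (P : pred I) (F : I -> 'M[C]_n) :
  \tr (\sum_(i <- r | P i) F i) = \sum_(i <- r | P i) \tr (F i).
Proof. exact: raddf_sum. Qed.

Lemma tr_delta m n (A : 'M[C]_(m, n)) (k : 'I_n) (l : 'I_m) :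
  \tr (A *m delta_mx k l) = A l k.
Proof.
rewrite /mxtrace (bigD1 l) //= big1 ?addr0 => [|r rl].
  rewrite mxE (bigD1 k) //= big1 ?addr0 => [|s sk].
    by rewrite !mxE !eqxx mulr1.
  by rewrite mxE (negbTE sk) mulr0.
by rewrite mxE big1 // => s _; rewrite mxE (negbTE rl) andbF mulr0n mulr0.
Qed.

(* The dual (Heisenberg-picture) map f^†, characterised by
   tr (f^†(P) X) = tr (P f(X)). *)
Definition dualm d e (f : 'M[C]_d -> 'M[C]_e) (P : 'M[C]_e) : 'M[C]_d :=
  \matrix_(i, j) \tr (P *m f (delta_mx j i)).

Lemma tr_dual_delta d e (f : 'M[C]_d -> 'M[C]_e) P k l :
  \tr (dualm f P *m delta_mx k l) = \tr (P *m f (delta_mx k l)).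
Proof. by rewrite tr_delta mxE. Qed.

Lemma tr_dual d e (f : 'M[C]_d -> 'M[C]_e) P Y :
  linear_map f -> \tr (dualm f P *m Y) = \tr (P *m f Y).
Proof.
move=> lf; rewrite (lin_expand lf Y) {1}(matrix_sum_delta Y).
rewrite !mulmx_sumr !tr_sum; apply: eq_bigr => i _.
rewrite !mulmx_sumr !tr_sum; apply: eq_bigr => j _.
by rewrite -!scalemxAr !mxtraceZ tr_dual_delta.
Qed.

Lemma dual_psd d e (f : 'M[C]_d -> 'M[C]_e) P :
  completely_positive f -> psd P -> psd (dualm f P).
Proof.
move=> cf pP; apply/psdP => v.
rewrite qf_tr tr_dual; last exact: cf.1.
by apply: tr_psd_mul pP _; apply: cp_psd cf _; exact: psd_outer.
Qed.

Lemma dual_sum d e (f : 'M[C]_d -> 'M[C]_e) I (r : seq I) (P : pred I)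
  (F : I -> 'M[C]_e) :
  dualm f (\sum_(i <- r | P i) F i) = \sum_(i <- r | P i) dualm f (F i).
Proof.
apply/matrixP => a b; rewrite mxE summxE mulmx_suml tr_sum.
by apply: eq_bigr => i _; rewrite mxE.
Qed.

Lemma instrument_dual1 nx' nx d (Lam : 'I_nx' -> 'I_nx -> 'M[C]_d -> 'M[C]_d)
  x' :
  instrument Lam -> \sum_x dualm (Lam x' x) 1%:M = 1%:M.
Proof.
move=> [_ tp]; apply/matrixP => i j; rewrite summxE.
under eq_bigr do rewrite mxE mul1mx.
by rewrite -tr_sum tp -(mul1mx (delta_mx j i)) tr_delta.
Qed.

Lemma tr_kron_dual d1 e1 d2 e2 (f : 'M[C]_d1 -> 'M[C]_e1)
  (g : 'M[C]_d2 -> 'M[C]_e2) P Q (X : 'M[C]_(d1 * d2)) :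
  \tr (kron (dualm f P) (dualm g Q) *m X) = \tr (kron P Q *m tens_map f g X).
Proof.
rewrite [in LHS](expand_kron X) /tens_map.
rewrite !mulmx_sumr !tr_sum; apply: eq_bigr => i _.
rewrite !mulmx_sumr !tr_sum; apply: eq_bigr => j _.
rewrite !mulmx_sumr !tr_sum; apply: eq_bigr => k _.
rewrite !mulmx_sumr !tr_sum; apply: eq_bigr => l _.
by rewrite -!scalemxAr !mxtraceZ !mul_kron !tr_kron !tr_dual_delta.
Qed.

End Maps.

Section Extension.
Variable C : numClosedFieldType.
Variables (dC dD : nat) (tau : 'M[C]_(dC * dD)).

Lemma density_kron m n (A : 'M[C]_m) (B : 'M[C]_n) :
  density A -> density B -> density (kron A B).
Proof.
move=> [pA tA] [pB tB]; split; first exact: psd_kron.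
by rewrite tr_kron tA tB mulr1.
Qed.

Hypothesis tau_density : density tau.

Lemma density_regroup_kron dA dB (X : 'M[C]_(dA * dB)) :
  density X -> density (regroup (kron X tau)).
Proof.
move=> dX; have [pk tk] := density_kron dX tau_density.
by split; [exact: psd_regroup | rewrite tr_regroup].
Qed.

Lemma pseudo_regroup_kron dA dB (X : 'M[C]_(dA * dB)) :
  pseudo_state X -> pseudo_state (regroup (kron X tau)).
Proof.
have [[ht _] tt] := tau_density; move=> [hX tX]; split.
  by rewrite /Defs.hermitian adj_regroup adj_kron hX ht.
by rewrite tr_regroup tr_kron tX tt mulr1.
Qed.

Lemma mix_regroup_kron dA dB (O s : 'M[C]_(dA * dB)) t :
  mix_op (regroup (kron O tau)) (regroup (kron s tau)) t
  = regroup (kron (mix_op O s t) tau).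
Proof. by rewrite /mix_op kronZl kronDl kronZl !regroupZ regroupD regroupZ. Qed.

End Extension.

(* Separability is preserved: the product of two separable decompositions is
   a separable decomposition for the cut AC:BD. *)
Lemma sep_regroup_kron (C : numClosedFieldType) dA dB dC dD
  (X : 'M[C]_(dA * dB)) (tau : 'M[C]_(dC * dD)) :
  separable X -> separable tau -> separable (regroup (kron X tau)).
Proof.
move=> [k [q [sA [sB [q0 [q1 [hs ->]]]]]]] [k' [r [tA [tB [r0 [r1 [ht ->]]]]]]].
exists (k * k')%N, (fun l => q (tsplit l).1 * r (tsplit l).2),
  (fun l => kron (sA (tsplit l).1) (tA (tsplit l).2)),
  (fun l => kron (sB (tsplit l).1) (tB (tsplit l).2)).
split; [|split; [|split]].
- by move=> l; apply: mulr_ge0.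
- by rewrite sum_prod_weights q1 r1 mulr1.
- by move=> l; split; apply: density_kron;
    [exact: (hs _).1 | exact: (ht _).1 | exact: (hs _).2 | exact: (ht _).2].
rewrite kron_suml regroup_sum sum_tidx; apply: eq_bigr => i _.
rewrite kron_sumr regroup_sum; apply: eq_bigr => j _.
by rewrite tsplitK /= kronZl kronZr !regroupZ regroup_kron scalerA mulrC.
Qed.

Section FourfoldSums.

Variables (I1 I2 I3 I4 : finType).

Lemma eq_sum4 (V : nmodType) (F G : I1 -> I2 -> I3 -> I4 -> V) :
  (forall a b x y, F a b x y = G a b x y) ->
  \sum_a \sum_b \sum_x \sum_y F a b x y = \sum_a \sum_b \sum_x \sum_y G a b x y.
Proof.
move=> FG; apply: eq_bigr => a _; apply: eq_bigr => b _.
by apply: eq_bigr => x _; apply: eq_bigr => y _.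
Qed.

Lemma mulr_sum4r (R : pzSemiRingType) (c : R) (F : I1 -> I2 -> I3 -> I4 -> R) :
  c * \sum_a \sum_b \sum_x \sum_y F a b x y
  = \sum_a \sum_b \sum_x \sum_y c * F a b x y.
Proof.
rewrite mulr_sumr; apply: eq_bigr => a _; rewrite mulr_sumr.
apply: eq_bigr => b _; rewrite mulr_sumr; apply: eq_bigr => x _.
by rewrite mulr_sumr.
Qed.

Lemma sum_swap4 (V : nmodType) (J : finType)
  (F : I1 -> I2 -> I3 -> I4 -> J -> V) :
  \sum_a \sum_b \sum_x \sum_y \sum_j F a b x y j
  = \sum_j \sum_a \sum_b \sum_x \sum_y F a b x y j.
Proof.
under eq_bigr => a _ do under eq_bigr => b _ do under eq_bigr => x _ do
  rewrite exchange_big.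
under eq_bigr => a _ do under eq_bigr => b _ do rewrite exchange_big.
by under eq_bigr => a _ do rewrite exchange_big; rewrite exchange_big.
Qed.

Lemma mul_sum4 (R : comPzSemiRingType) (f : I1 -> I3 -> R) (g : I2 -> I4 -> R) :
  (\sum_a \sum_x f a x) * (\sum_b \sum_y g b y)
  = \sum_a \sum_b \sum_x \sum_y f a x * g b y.
Proof.
rewrite mulr_suml; apply: eq_bigr => a _; rewrite mulr_sumr.
apply: eq_bigr => b _; rewrite mulr_suml; apply: eq_bigr => x _.
by rewrite mulr_sumr.
Qed.

End FourfoldSums.

Section OneParty.
Variable C : numClosedFieldType.
Variables (na nx na' nx' d : nat).
Variable Lam : 'I_nx' -> 'I_nx -> 'M[C]_d -> 'M[C]_d.
Variable M2 : 'I_na' -> 'I_na -> 'I_nx -> 'I_nx' -> 'M[C]_d.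
Hypothesis Lam_instrument : instrument Lam.
Hypothesis M2_povm : forall a x x', povm (fun a' => M2 a' a x x').

Lemma dual_M2_sum a x x' :
  \sum_a' dualm (Lam x' x) (M2 a' a x x') = dualm (Lam x' x) 1%:M.
Proof. by rewrite -dual_sum (M2_povm a x x').2. Qed.

(* If the party's box is realized by the POVMs M on system A, the wiring is
   realized on AC by these POVMs. *)
Definition wired_povm dA (M : 'I_na -> 'I_nx -> 'M[C]_dA) a' x'
  : 'M[C]_(dA * d) :=
  \sum_a \sum_x kron (M a x) (dualm (Lam x' x) (M2 a' a x x')).

Lemma povm_wired_povm dA (M : 'I_na -> 'I_nx -> 'M[C]_dA) x' :
  (forall x, povm (fun a => M a x)) -> povm (fun a' => wired_povm M a' x').
Proof.
move=> M_povm; split.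
  move=> a'; apply: psd_sum => a _; apply: psd_sum => x _.
  apply: psd_kron; first exact: (M_povm x).1.
  by apply: dual_psd; [exact: Lam_instrument.1 | exact: (M2_povm a x x').1].
rewrite /wired_povm exchange_big /=.
transitivity (\sum_a \sum_x kron (M a x) (dualm (Lam x' x) 1%:M)).
  apply: eq_bigr => a _; rewrite exchange_big /=; apply: eq_bigr => x _.
  by rewrite -kron_sumr dual_M2_sum.
rewrite exchange_big /=; under eq_bigr do rewrite -kron_suml (M_povm _).2.
by rewrite -kron_sumr instrument_dual1 // kron1.
Qed.

(* In a local model the party holds the state sig and the response pA; after
   the wiring its response becomes [wired_response sig pA]. *)
Definition wired_response (sig : 'M[C]_d) (pA : 'I_na -> 'I_nx -> C) a' x'
  : C :=
  \sum_a \sum_x \tr (dualm (Lam x' x) (M2 a' a x x') *m sig) * pA a x.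

Lemma cond_distr_wired_response sig pA :
  density sig -> cond_distr pA -> cond_distr (wired_response sig pA).
Proof.
move=> [sig_psd sig_tr] [pA_ge0 pA_sum]; split.
  move=> a' x'; apply: sumr_ge0 => a _; apply: sumr_ge0 => x _.
  apply: mulr_ge0 => //; apply: tr_psd_mul => //.
  by apply: dual_psd; [exact: Lam_instrument.1 | exact: (M2_povm a x x').1].
move=> x'; rewrite /wired_response exchange_big /=.
transitivity (\sum_a \sum_x \tr (dualm (Lam x' x) 1%:M *m sig) * pA a x).
  apply: eq_bigr => a _; rewrite exchange_big /=; apply: eq_bigr => x _.
  by rewrite -mulr_suml -tr_sum -mulmx_suml dual_M2_sum.
rewrite exchange_big /=.
under eq_bigr => x _ do rewrite -mulr_sumr pA_sum mulr1.
by rewrite -tr_sum -mulmx_suml instrument_dual1 // mul1mx.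
Qed.

End OneParty.

Section Wiring.
Variable C : numClosedFieldType.
Variables (na nb nx ny na' nb' nx' ny' dC dD : nat).
Variable Lam : 'I_nx' -> 'I_nx -> 'M[C]_dC -> 'M[C]_dC.
Variable Gam : 'I_ny' -> 'I_ny -> 'M[C]_dD -> 'M[C]_dD.
Variable M2 : 'I_na' -> 'I_na -> 'I_nx -> 'I_nx' -> 'M[C]_dC.
Variable N2 : 'I_nb' -> 'I_nb -> 'I_ny -> 'I_ny' -> 'M[C]_dD.
Hypothesis Lam_instrument : instrument Lam.
Hypothesis Gam_instrument : instrument Gam.
Hypothesis M2_povm : forall a x x', povm (fun a' => M2 a' a x x').
Hypothesis N2_povm : forall b y y', povm (fun b' => N2 b' b y y').

Local Notation wire q tau := (wired q tau Lam Gam M2 N2).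

Lemma wired_heisenberg (q : box C na nb nx ny) tau a' b' x' y' :
  wire q tau a' b' x' y' =
  \sum_a \sum_b \sum_x \sum_y
     \tr (kron (dualm (Lam x' x) (M2 a' a x x'))
               (dualm (Gam y' y) (N2 b' b y y')) *m tau) * q a b x y.
Proof. by apply: eq_sum4 => a b x y; rewrite tr_kron_dual. Qed.

Lemma realizes_wired dA dB (q : box C na nb nx ny) tau (O : 'M[C]_(dA * dB)) :
  realizes O q -> realizes (regroup (kron O tau)) (wire q tau).
Proof.
move=> [M [N [M_povm [N_povm qE]]]].
exists (wired_povm Lam M2 M), (wired_povm Gam N2 N); split; [|split].
- by move=> x'; apply: povm_wired_povm.
- by move=> y'; apply: povm_wired_povm.
move=> a' b' x' y'; rewrite wired_heisenberg /wired_povm kron_sum4.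
rewrite mulmx_suml tr_sum.
apply: eq_bigr => a _; rewrite exchange_big mulmx_suml tr_sum.
apply: eq_bigr => x _; rewrite mulmx_suml tr_sum.
apply: eq_bigr => b _; rewrite mulmx_suml tr_sum.
apply: eq_bigr => y _.
by rewrite tr_regroup_kron qE mulrC.
Qed.

Lemma wired_mix (v w : box C na nb nx ny) t tau a' b' x' y' :
  wire (mix_box v w t) tau a' b' x' y'
  = mix_box (wire v tau) (wire w tau) t a' b' x' y'.
Proof.
have mixE I (r : seq I) (P : pred I) (F G : I -> C) :
    (\sum_(i <- r | P i) F i + t * \sum_(i <- r | P i) G i) / (1 + t)
    = \sum_(i <- r | P i) (F i + t * G i) / (1 + t).
  by rewrite mulr_sumr -big_split mulr_suml.
rewrite /wired /mix_box mixE; apply: eq_bigr => a _.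
rewrite mixE; apply: eq_bigr => b _; rewrite mixE; apply: eq_bigr => x _.
by rewrite mixE; apply: eq_bigr => y _; rewrite mulrA mulrDr mulrCA.
Qed.

Lemma wired_sum_box (I : finType) (w : I -> C) (qs : I -> box C na nb nx ny)
  (q : box C na nb nx ny) tau :
  (forall a b x y, q a b x y = \sum_i w i * qs i a b x y) ->
  forall a' b' x' y',
    wire q tau a' b' x' y' = \sum_i w i * wire (qs i) tau a' b' x' y'.
Proof.
move=> qE a' b' x' y'; rewrite wired_heisenberg.
under eq_bigr => a _ do under eq_bigr => b _ do under eq_bigr => x _ do
  under eq_bigr => y _ do rewrite qE mulr_sumr.
rewrite sum_swap4; apply: eq_bigr => i _.
by rewrite wired_heisenberg mulr_sum4r; apply: eq_sum4 => a b x y; rewrite mulrCA.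
Qed.

Lemma wired_sum_state (I : finType) (r : I -> C) (taus : I -> 'M[C]_(dC * dD))
  (q : box C na nb nx ny) a' b' x' y' :
  wire q (\sum_j r j *: taus j) a' b' x' y'
  = \sum_j r j * wire q (taus j) a' b' x' y'.
Proof.
rewrite wired_heisenberg.
under eq_bigr => a _ do under eq_bigr => b _ do under eq_bigr => x _ do
  under eq_bigr => y _ do rewrite mulmx_sumr tr_sum mulr_suml.
rewrite sum_swap4; apply: eq_bigr => j _; rewrite wired_heisenberg mulr_sum4r.
by apply: eq_sum4 => a b x y; rewrite -scalemxAr mxtraceZ mulrA.
Qed.

Lemma wired_product (sA : 'M[C]_dC) (sB : 'M[C]_dD) (pA : 'I_na -> 'I_nx -> C)
  (pB : 'I_nb -> 'I_ny -> C) a' b' x' y' :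
  wire (fun a b x y => pA a x * pB b y) (kron sA sB) a' b' x' y'
  = wired_response Lam M2 sA pA a' x' * wired_response Gam N2 sB pB b' y'.
Proof.
rewrite wired_heisenberg /wired_response mul_sum4.
by apply: eq_sum4 => a b x y; rewrite mul_kron tr_kron mulrACA.
Qed.

(* Local boxes wired with a separable state stay local: the hidden variable
   is the pair (index of the local model, index of the separable
   decomposition). *)
Lemma local_wired (q : box C na nb nx ny) tau :
  separable tau -> local_box q -> local_box (wire q tau).
Proof.
move=> [k' [r [sA [sB [r_ge0 [r_sum [s_density ->]]]]]]].
move=> [k [w [pA [pB [w_ge0 [w_sum [p_cond qE]]]]]]].
exists (k * k')%N, (fun l => w (tsplit l).1 * r (tsplit l).2),
 (fun l => wired_response Lam M2 (sA (tsplit l).2) (pA (tsplit l).1)),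
 (fun l => wired_response Gam N2 (sB (tsplit l).2) (pB (tsplit l).1)).
split; [|split; [|split]].
- by move=> l; apply: mulr_ge0.
- by rewrite sum_prod_weights w_sum r_sum mulr1.
- by move=> l; split; apply: cond_distr_wired_response => //;
    [exact: (s_density _).1 | exact: (p_cond _).1
    | exact: (s_density _).2 | exact: (p_cond _).2].
move=> a' b' x' y'.
have qE' a b x y : q a b x y = \sum_i w i * (pA i a x * pB i b y).
  by rewrite qE; apply: eq_bigr => i _; rewrite mulrA.
rewrite (wired_sum_box _ qE') sum_tidx; apply: eq_bigr => i _.
rewrite wired_sum_state mulr_sumr; apply: eq_bigr => j _.
by rewrite wired_product tsplitK /= -!mulrA (mulrCA (r j)).
Qed.

Lemma quantum_wired (q : box C na nb nx ny) tau :
  density tau -> quantum_box q -> quantum_box (wire q tau).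
Proof.
move=> tau_density [dA [dB [rho [rho_density rho_q]]]].
exists (dA * dC)%N, (dB * dD)%N, (regroup (kron rho tau)); split.
  exact: density_regroup_kron.
exact: realizes_wired.
Qed.

End Wiring.

Section Robustness.
Variable C : numClosedFieldType.

Lemma inf_le_of_feasible (F G : C -> Prop) :
  (forall t, G t -> F t) -> inf_le F G.
Proof.
move=> GF t Gt eps eps_gt0; exists t; split; first exact: GF.
by rewrite ltrDl.
Qed.

Lemma rob_feasible_transfer na nb nx ny na' nb' nx' ny'
  (S : box C na nb nx ny -> Prop) (S' : box C na' nb' nx' ny' -> Prop)
  (f : box C na nb nx ny -> box C na' nb' nx' ny') v t :
  (forall p1 p2, (forall a b x y, p1 a b x y = p2 a b x y) -> S' p1 -> S' p2) ->
  (forall w, S w -> S' (f w)) ->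
  (forall w s a b x y,
     f (mix_box v w s) a b x y = mix_box (f v) (f w) s a b x y) ->
  rob_feasible S v t -> rob_feasible S' (f v) t.
Proof.
move=> S'_ext Sf f_mix [t_ge0 [w [Sw Smix]]]; split => //.
exists (f w); split; first exact: Sf.
by apply: S'_ext (Sf _ Smix) => a b x y; rewrite f_mix.
Qed.

Lemma local_box_ext na nb nx ny (p1 p2 : box C na nb nx ny) :
  (forall a b x y, p1 a b x y = p2 a b x y) -> local_box p1 -> local_box p2.
Proof.
move=> E [k [q [pA [pB [q_ge0 [q_sum [p_cond pE]]]]]]].
by exists k, q, pA, pB; do 3!split => //; move=> a b x y; rewrite -E.
Qed.

Lemma quantum_box_ext na nb nx ny (p1 p2 : box C na nb nx ny) :
  (forall a b x y, p1 a b x y = p2 a b x y) -> quantum_box p1 -> quantum_box p2.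
Proof.
move=> E [dA [dB [rho [rho_density [M [N [M_povm [N_povm pE]]]]]]]].
exists dA, dB, rho; split => //; exists M, N; do 2!split => //.
by move=> a b x y; rewrite -E.
Qed.

(* Feasibility for the operator-based robustnesses r_S(p) and r_D(p),
   parametrised by the class S of free operators (separable operators,
   resp. density operators). *)
Definition op_rob_feasible (S : forall m n, 'M[C]_(m * n) -> Prop)
  na nb nx ny (p : box C na nb nx ny) (t : C) : Prop :=
  0 <= t /\ exists (dA dB : nat) (O s : 'M[C]_(dA * dB)),
    pseudo_state O /\ realizes O p /\ S dA dB s /\ S dA dB (mix_op O s t).

Lemma op_rob_feasible_transfer (S : forall m n, 'M[C]_(m * n) -> Prop)
  na nb nx ny na' nb' nx' ny'
  (p : box C na nb nx ny) (p' : box C na' nb' nx' ny')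
  dC dD (tau : 'M[C]_(dC * dD)) t :
  density tau ->
  (forall dA dB (O : 'M[C]_(dA * dB)), realizes O p ->
     realizes (regroup (kron O tau)) p') ->
  (forall dA dB (X : 'M[C]_(dA * dB)), S dA dB X ->
     S (dA * dC)%N (dB * dD)%N (regroup (kron X tau))) ->
  op_rob_feasible S p t -> op_rob_feasible S p' t.
Proof.
move=> tau_density realizes_p' S_ext.
move=> [t_ge0 [dA [dB [O [s [O_pseudo [O_p [Ss Smix]]]]]]]]; split => //.
exists (dA * dC)%N, (dB * dD)%N, (regroup (kron O tau)), (regroup (kron s tau)).
split; first exact: pseudo_regroup_kron.
split; first exact: realizes_p'.
by rewrite mix_regroup_kron; split; apply: S_ext.
Qed.

End Robustness.

Theorem mainTheorem8 (C : numClosedFieldType)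
  (na nb nx ny na' nb' nx' ny' dC dD : nat)
  (p : box C na nb nx ny) (tau : 'M[C]_(dC * dD))
  (Lam : 'I_nx' -> 'I_nx -> 'M[C]_dC -> 'M[C]_dC)
  (Gam : 'I_ny' -> 'I_ny -> 'M[C]_dD -> 'M[C]_dD)
  (M2 : 'I_na' -> 'I_na -> 'I_nx -> 'I_nx' -> 'M[C]_dC)
  (N2 : 'I_nb' -> 'I_nb -> 'I_ny -> 'I_ny' -> 'M[C]_dD) :
  is_box p -> no_signalling p -> density tau ->
  instrument Lam -> instrument Gam ->
  (forall a x x', povm (fun a' => M2 a' a x x')) ->
  (forall b y y', povm (fun b' => N2 b' b y y')) ->
  let p' := wired p tau Lam Gam M2 N2 in
  (separable tau ->
     inf_le (rob_feasible (@local_box C na' nb' nx' ny') p')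
            (rob_feasible (@local_box C na nb nx ny) p) /\
     inf_le (rob_sep_feasible p') (rob_sep_feasible p)) /\
  (inf_le (rob_feasible (@quantum_box C na' nb' nx' ny') p')
          (rob_feasible (@quantum_box C na nb nx ny) p) /\
   inf_le (rob_dens_feasible p') (rob_dens_feasible p)) /\
  (forall (dA dB : nat) (O : 'M[C]_(dA * dB)),
     pseudo_state O -> realizes O p ->
     realizes (regroup (kron O tau)) p').
Proof.
move=> _ _ tau_density Lam_inst Gam_inst M2_povm N2_povm p'.
have realizes_p' dA dB (O : 'M[C]_(dA * dB)) :
    realizes O p -> realizes (regroup (kron O tau)) p'.
  exact: realizes_wired.
pose f q := wired q tau Lam Gam M2 N2.
split; [move=> tau_sep; split | split; [split|]].
- apply: inf_le_of_feasible => t; apply: (rob_feasible_transfer (f := f)).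
  + exact: local_box_ext.
  + by move=> w; exact: local_wired.
  + by move=> w s a b x y; exact: wired_mix.
- apply: inf_le_of_feasible => t.
  apply: (op_rob_feasible_transfer (S := @separable C) (tau := tau)) => //.
  by move=> dA dB X X_sep; exact: sep_regroup_kron.
- apply: inf_le_of_feasible => t; apply: (rob_feasible_transfer (f := f)).
  + exact: quantum_box_ext.
  + by move=> w; exact: quantum_wired.
  + by move=> w s a b x y; exact: wired_mix.
- apply: inf_le_of_feasible => t.
  pose S m n := @density C (m * n).
  apply: (op_rob_feasible_transfer (S := S) (tau := tau)) => //.
  exact: density_regroup_kron.
- by move=> dA dB O _; exact: realizes_p'.
Qed.
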